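(* Let $0\le\alpha<\tfrac12$ and let $D$ be a distribution on $\{0,1\}^n$ given by a forest BN (every node has at most one parent) with all conditional probabilities in $(0,1)$ that is $\alpha$-difference bounded. Then every conjunction $f$ of $d$ literals satisfies $L_1(f)\le\left(\frac{2-2\alpha}{1-2\alpha}\right)^{2d}$.
   Context: For a BN with parent sets $\operatorname{pa}(v)$, let $\mu_{v,x_{\operatorname{pa}(v)}}=P(X_v=1\mid X_{\operatorname{pa}(v)}=x_{\operatorname{pa}(v)})$ and $\sigma_{v,x_{\operatorname{pa}(v)}}=\sqrt{\mu_{v,x_{\operatorname{pa}(v)}}(1-\mu_{v,x_{\operatorname{pa}(v)}})}$ (for roots, $\mu_v=P(X_v=1)$). The BN is $\alpha$-difference bounded if for every $v$ and every two assignments $x,y$ to $\operatorname{pa}(v)$, $|\mu_{v,x}-\mu_{v,y}|\le\alpha$ and $|\sigma_{v,x}-\sigma_{v,y}|\le\alpha$. The BN-induced basis is $\phi_v(x)=(x_v-\mu_{v,x_{\operatorname{pa}(v)}})/\sigma_{v,x_{\operatorname{pa}(v)}}$, $\phi_S=\prod_{v\in S}\phi_v$; $\hat f_S=\mathbb{E}_D[f(X)\phi_S(X)]$; $L_1(f)=\sum_{S\subseteq[n]}|\hat f_S|$. A conjunction of $d$ literals is $f(x)=\prod_{i\in T_1}x_i\prod_{j\in T_0}(1-x_j)$ with $T_0,T_1$ disjoint and $|T_0\cup T_1|=d$. *)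

From HB Require Import structures.
From mathcomp Require Import all_boot all_order all_algebra.
Set Implicit Arguments. Unset Strict Implicit. Unset Printing Implicit Defensive.
Import Order.TTheory GRing.Theory Num.Theory.
Local Open Scope ring_scope.

Notation pt n := {ffun 'I_n -> bool}.

(* A forest Bayesian network on n binary variables:
   - pa v = None  : v is a root, P(X_v = 1) = cp v false (cp v true unused);
   - pa v = Some u: v has the single parent u, P(X_v = 1 | X_u = b) = cp v b. *)
Record forestBN (R : Type) (n : nat) := ForestBN {
  pa : 'I_n -> option 'I_n;
  cp : 'I_n -> bool -> R
}.

Section BN.
Variables (R : rcfType) (n : nat) (B : forestBN R n).

Definition acyclic : Prop :=
  exists rk : 'I_n -> nat, forall u v, pa B v = Some u -> (rk u < rk v)%N.

Definition mu (v : 'I_n) (x : pt n) : R :=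
  match pa B v with Some u => cp B v (x u) | None => cp B v false end.

Definition sigma (v : 'I_n) (x : pt n) : R := Num.sqrt (mu v x * (1 - mu v x)).

Definition distr (x : pt n) : R :=
  \prod_(v < n) (if x v then mu v x else 1 - mu v x).

Definition cp_open : Prop := forall v x, 0 < mu v x < 1.

Definition diff_bounded (alpha : R) : Prop :=
  forall v x y, `|mu v x - mu v y| <= alpha /\ `|sigma v x - sigma v y| <= alpha.

Definition phi (v : 'I_n) (x : pt n) : R := ((x v)%:R - mu v x) / sigma v x.
Definition phiS (S : {set 'I_n}) (x : pt n) : R := \prod_(v in S) phi v x.

Definition fcoef (f : pt n -> R) (S : {set 'I_n}) : R :=
  \sum_(x : pt n) distr x * (f x * phiS S x).

Definition L1 (f : pt n -> R) : R := \sum_(S : {set 'I_n}) `|fcoef f S|.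
End BN.

Definition conj (R : rcfType) (n : nat) (T0 T1 : {set 'I_n}) (x : pt n) : R :=
  (\prod_(i in T1) ((x i)%:R : R)) * \prod_(j in T0) (1 - ((x j)%:R : R)).

From HB Require Import structures.
From mathcomp Require Import all_boot all_order all_algebra.
From mathcomp Require Import ring lra.
Import Order.TTheory GRing.Theory Num.Theory.
Local Open Scope ring_scope.

Set Implicit Arguments.
Unset Strict Implicit.
Unset Printing Implicit Defensive.

(* Pad the BN distribution: for a parent-closed set A of nodes keep the BN factors on A and make
   the other bits uniform, and bound the L1 mass of a conjunction f over the subsets of A by
   induction on A. Remove from A a node v with no child in A and sum out x_v. Writing
   f = g(x_v) f', the coefficients of f at S and at v |: S (S within A \ v) become the
   coefficients over A \ v of E[g(X_v) | parent] f' and (g(1) - g(0)) sigma_v f', because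
   E[phi_v | parent] = 0 and E[X_v phi_v | parent] = sigma_v. Both multipliers are affine in the
   parent bit x_u, with constant parts of total size <= 3/2 and slopes of total size <= 2 alpha,
   and f' x_u is again a conjunction with at most one more literal. Hence the bound
   K^d satisfies the recursion K^(d+1) >= 3/2 K^d + 2 alpha K^(d+1) once 3/2 + 2 alpha K <= K,
   which holds for K = ((2 - 2 alpha) / (1 - 2 alpha))^2. *)

Definition upd n (x : pt n) (v : 'I_n) (b : bool) : pt n :=
  [ffun i => if i == v then b else x i].

Lemma upd_eq n (x : pt n) v b : upd x v b v = b.
Proof. by rewrite ffunE eqxx. Qed.

Lemma upd_neq n (x : pt n) v b i : i != v -> upd x v b i = x i.
Proof. by rewrite ffunE => /negbTE ->. Qed.

Lemma upd_id n (x : pt n) v : upd x v (x v) = x.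
Proof. by apply/ffunP=> i; rewrite ffunE; case: eqP => // ->. Qed.

Lemma upd_upd n (x : pt n) v b c : upd (upd x v b) v c = upd x v c.
Proof. by apply/ffunP=> i; rewrite !ffunE; case: eqP. Qed.

Lemma sum_upd (R : numFieldType) n (v : 'I_n) (F : pt n -> R) :
  \sum_x F x = 2^-1 * \sum_x (F (upd x v true) + F (upd x v false)).
Proof.
pose flip x := upd x v (~~ x v).
have flipK : involutive flip by move=> x; rewrite /flip upd_upd upd_eq negbK upd_id.
have sum_flip : \sum_x F (flip x) = \sum_x F x.
  exact: esym (reindex_inj (inv_inj flipK)).
have pair_upd x : F (upd x v true) + F (upd x v false) = F x + F (flip x).
  by rewrite /flip -{3}(upd_id x v); case: (x v); rewrite //= addrC.
rewrite (eq_bigr _ (fun x _ => pair_upd x)) big_split /= sum_flip.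
by rewrite mulrDr !(mulrC 2^-1) -splitr.
Qed.

Lemma sum_subset_setD1 (V : nmodType) (T : finType) (A : {set T}) v (F : {set T} -> V) :
  v \in A ->
  \sum_(S : {set T} | S \subset A) F S
  = \sum_(S : {set T} | S \subset A :\ v) (F S + F (v |: S)).
Proof.
move=> vA; rewrite (bigID (fun S : {set T} => v \in S)) /= addrC big_split /=; congr (_ + _).
  by apply: eq_bigl => S; rewrite subsetD1.
rewrite (reindex_onto (fun S => v |: S) (fun S => S :\ v)) /=; last first.
  by move=> S /andP [_ vS]; rewrite setD1K.
apply: eq_bigl => S; rewrite subsetD1 setU11 andbT; apply/andP/andP => [[sSA /eqP eS]|].
  have vS : v \notin S by rewrite -eS setD11.
  by split=> //; apply: subset_trans sSA; apply: subsetU1.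
by case=> sSA vS; rewrite setU1K // subUset sub1set vA sSA.
Qed.

Lemma bool_affine (R : pzRingType) (F : bool -> R) b :
  F b = F false + (F true - F false) * b%:R.
Proof. by case: b; rewrite ?mulr1 ?mulr0 ?addr0 // addrC subrK. Qed.

Lemma prod_setD1 (R : comPzSemiRingType) (T : finType) (A : {set T}) v (F : T -> R) :
  \prod_(i in A) F i = (if v \in A then F v else 1) * \prod_(i in A :\ v) F i.
Proof.
case: ifP => vA; first by rewrite (big_setD1 v vA).
by rewrite mul1r; apply: eq_bigl => i; rewrite in_setD1; case: eqP => // ->; rewrite vA.
Qed.

Definition growth (R : realFieldType) (alpha : R) : R :=
  ((2 - 2 * alpha) / (1 - 2 * alpha)) ^+ 2.

Section Growth.
Variables (R : realFieldType) (alpha : R).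

Lemma growth_ge1 : 0 <= alpha -> alpha < 1 / 2 -> 1 <= growth alpha.
Proof.
move=> a0 a1; have t0 : 0 < 1 - 2 * alpha by lra.
by rewrite exprn_ege1 // ler_pdivlMr // mul1r; lra.
Qed.

(* (1 - 2 alpha) growth = (2 - 2 alpha)^2 / (1 - 2 alpha) >= 4 > 3/2 *)
Lemma growth_step : 0 <= alpha -> alpha < 1 / 2 ->
  3 / 2 + 2 * alpha * growth alpha <= growth alpha.
Proof.
move=> a0 a1; have t0 : 0 < 1 - 2 * alpha by lra.
set t := 1 - 2 * alpha in t0 *; set q := (2 - 2 * alpha) / t.
have qt : q * t = 1 + t by rewrite /q divfK ?gt_eqF // /t; lra.
have q1 : 1 <= q by rewrite /q ler_pdivlMr // mul1r /t; lra.
rewrite /growth -/t -/q expr2.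
have -> : 2 * alpha = 1 - t by rewrite /t; lra.
have tqq : t * (q * q) = q + 1 + t.
  by rewrite mulrCA [t * q]mulrC qt mulrDr mulr1 qt addrA.
nra.
Qed.

End Growth.

Section ForestBN.
Variables (R : rcfType) (n : nat) (B : forestBN R n).
Implicit Types (A S : {set 'I_n}) (x : pt n) (u v w : 'I_n) (b : bool).

Definition free_of v (F : pt n -> R) := forall x b, F (upd x v b) = F x.

Definition childless A v := forall w, w \in A -> pa B w <> Some v.

Definition ancestral A := forall w u, w \in A -> pa B w = Some u -> u \in A.

(* BN factors on the nodes of A and uniform bits elsewhere, so [distrA setT] is [distr B];
   [L1A A] only sums the coefficients of the subsets of A. *)
Definition weight A v x : R :=
  if v \in A then (if x v then mu B v x else 1 - mu B v x) else 2^-1.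
Definition distrA A x : R := \prod_(v < n) weight A v x.
Definition fcoefA A (g : pt n -> R) S : R := \sum_x distrA A x * (g x * phiS B S x).
Definition L1A A (g : pt n -> R) : R := \sum_(S : {set 'I_n} | S \subset A) `|fcoefA A g S|.

Lemma mu_free v w : pa B w <> Some v -> free_of v (mu B w).
Proof.
move=> wv x b; rewrite /mu; case E: (pa B w) => [u|] //; rewrite upd_neq //.
by apply/eqP => uv; apply: wv; rewrite E uv.
Qed.

Lemma sigma_free v w : pa B w <> Some v -> free_of v (sigma B w).
Proof. by move=> wv x b; rewrite /sigma (mu_free wv). Qed.

Lemma phiS_free v S : v \notin S -> childless S v -> free_of v (phiS B S).
Proof.
move=> vS Sv x b; apply: eq_bigr => w wS.
have wv : w != v by apply: contraNneq vS => <-.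
by rewrite /phi upd_neq // (mu_free (Sv w wS)) (sigma_free (Sv w wS)).
Qed.

Lemma conj_free v (T0 T1 : {set 'I_n}) :
  v \notin T0 -> v \notin T1 -> free_of v (conj R T0 T1).
Proof.
move=> vT0 vT1 x b; rewrite /conj; congr (_ * _); apply: eq_bigr => i iT; rewrite upd_neq //.
- by apply: contraNneq vT1 => <-.
- by apply: contraNneq vT0 => <-.
Qed.

Lemma distrA_upd A v x b : v \in A -> childless A v ->
  distrA A (upd x v b) = (if b then mu B v x else 1 - mu B v x) * (2 * distrA (A :\ v) x).
Proof.
move=> vA Av; rewrite /distrA (bigD1 v) // [in RHS](bigD1 v) //= {1 3}/weight vA setD11 upd_eq.
rewrite (mu_free (Av v vA)) [2 * _]mulrA mulfV ?pnatr_eq0 // mul1r; congr (_ * _).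
apply: eq_bigr => w wv; rewrite /weight in_setD1 wv /=; case: ifP => // wA.
by rewrite upd_neq // (mu_free (Av w wA)).
Qed.

Lemma sum_distrA_elim A v (Q : pt n -> R) : v \in A -> childless A v ->
  \sum_x distrA A x * Q x =
  \sum_x distrA (A :\ v) x
          * (mu B v x * Q (upd x v true) + (1 - mu B v x) * Q (upd x v false)).
Proof.
move=> vA Av; rewrite (sum_upd v) big_distrr; apply: eq_bigr => x _ /=.
by rewrite !distrA_upd //; field.
Qed.

Definition lit (T0 T1 : {set 'I_n}) v b : R :=
  (if v \in T1 then b%:R else 1) * (if v \in T0 then 1 - b%:R else 1).

Lemma lit_bool (T0 T1 : {set 'I_n}) v b : lit T0 T1 v b = 0 \/ lit T0 T1 v b = 1.
Proof.
rewrite /lit; case: b; case: (v \in T1); case: (v \in T0);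
  by rewrite /= ?subrr ?subr0 ?mulr0 ?mulr1; auto.
Qed.

Lemma lit_diff_le1 (T0 T1 : {set 'I_n}) v : `|lit T0 T1 v true - lit T0 T1 v false| <= 1.
Proof.
by case: (lit_bool T0 T1 v true) => ->; case: (lit_bool T0 T1 v false) => ->;
  rewrite ?subrr ?subr0 ?sub0r ?normrN ?normr0 ?normr1.
Qed.

Lemma lit_out (T0 T1 : {set 'I_n}) v b : v \notin T0 :|: T1 -> lit T0 T1 v b = 1.
Proof. by rewrite in_setU negb_or /lit => /andP [/negbTE -> /negbTE ->]; rewrite mulr1. Qed.

Lemma conj_upd (T0 T1 : {set 'I_n}) v x b :
  conj R T0 T1 (upd x v b) = lit T0 T1 v b * conj R (T0 :\ v) (T1 :\ v) x.
Proof.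
have conj_split y : conj R T0 T1 y = lit T0 T1 v (y v) * conj R (T0 :\ v) (T1 :\ v) y.
  by rewrite /conj /lit (prod_setD1 T1 v) (prod_setD1 T0 v) mulrACA.
by rewrite conj_split upd_eq conj_free ?setD11.
Qed.

Lemma conj_mul_bit (T0 T1 : {set 'I_n}) u x :
  conj R T0 T1 x * (x u)%:R = conj R T0 (u |: T1) x.
Proof.
rewrite /conj mulrAC; congr (_ * _).
have [uT1 | uT1] := boolP (u \in T1); last by rewrite big_setU1 //= mulrC.
rewrite (setUidPr _) ?sub1set // (big_setD1 u uT1) /=.
by case: (x u); rewrite /= ?mul1r ?mulr1 ?mul0r.
Qed.

Definition parent_bit v x : bool := if pa B v is Some u then x u else false.

Definition const_pt b : pt n := [ffun=> b].

Lemma mu_parent_bit v x : mu B v x = mu B v (const_pt (parent_bit v x)).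
Proof. by rewrite /mu /parent_bit; case: (pa B v) => [u|] //; rewrite ffunE. Qed.

Lemma sigma_parent_bit v x : sigma B v x = sigma B v (const_pt (parent_bit v x)).
Proof. by rewrite /sigma -mu_parent_bit. Qed.

Definition lit_mean (T0 T1 : {set 'I_n}) v b : R :=
  mu B v (const_pt b) * lit T0 T1 v true + (1 - mu B v (const_pt b)) * lit T0 T1 v false.

Definition lit_dev (T0 T1 : {set 'I_n}) v b : R :=
  (lit T0 T1 v true - lit T0 T1 v false) * sigma B v (const_pt b).

Lemma lit_mean_out (T0 T1 : {set 'I_n}) v b : v \notin T0 :|: T1 -> lit_mean T0 T1 v b = 1.
Proof. by move=> vT; rewrite /lit_mean !lit_out // !mulr1 subrKC. Qed.

Lemma lit_dev_out (T0 T1 : {set 'I_n}) v b : v \notin T0 :|: T1 -> lit_dev T0 T1 v b = 0.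
Proof. by move=> vT; rewrite /lit_dev !lit_out // subrr mul0r. Qed.

Lemma eq_fcoefA A (g h : pt n -> R) S : g =1 h -> fcoefA A g S = fcoefA A h S.
Proof. by move=> gh; apply: eq_bigr => x _; rewrite gh. Qed.

Lemma fcoefA_affine A (g h : pt n -> R) a c S :
  fcoefA A (fun x => (a + c * h x) * g x) S
  = a * fcoefA A g S + c * fcoefA A (fun x => g x * h x) S.
Proof. by rewrite /fcoefA !big_distrr -big_split; apply: eq_bigr => x _ /=; ring. Qed.

Lemma fcoefA_elim A v (T0 T1 S : {set 'I_n}) :
  v \in A -> childless A v -> S \subset A :\ v ->
  fcoefA A (conj R T0 T1) S =
  fcoefA (A :\ v) (fun x => (mu B v x * lit T0 T1 v true + (1 - mu B v x) * lit T0 T1 v false)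
                            * conj R (T0 :\ v) (T1 :\ v) x) S.
Proof.
move=> vA Av /subsetD1P [sSA vS].
have Sv : childless S v by move=> w /(subsetP sSA); apply: Av.
rewrite /fcoefA (sum_distrA_elim _ vA Av); apply: eq_bigr => x _; congr (_ * _).
by rewrite !conj_upd !(phiS_free vS Sv); ring.
Qed.

Lemma L1A_ge0 A (g : pt n -> R) : 0 <= L1A A g.
Proof. exact: sumr_ge0. Qed.

Lemma L1A_conj_parent_bit A (T0 T1 : {set 'I_n}) v :
  L1A A (fun x => conj R T0 T1 x * (parent_bit v x)%:R) =
  if pa B v is Some u then L1A A (conj R T0 (u |: T1)) else 0.
Proof.
rewrite /parent_bit; case: (pa B v) => [u|].
  by apply: eq_bigr => S _; congr `|_|; apply: eq_fcoefA => x; apply: conj_mul_bit.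
by apply: big1 => S _; rewrite /fcoefA big1 ?normr0 // => x _; rewrite mulr0 mul0r mulr0.
Qed.

Lemma L1A_set0 : L1A set0 (conj R set0 set0) = 1.
Proof.
rewrite /L1A (eq_bigl (pred1 set0)) => [|S]; last by rewrite subset0.
rewrite big_pred1_eq /fcoefA.
have uniform x : distrA set0 x * (conj R set0 set0 x * phiS B set0 x)
                 = \prod_(v < n) (fun _ _ => 2^-1 : R) v (x v).
  by rewrite /conj /phiS !big_set0 !mulr1; apply: eq_bigr => v _; rewrite /weight in_set0.
rewrite (eq_bigr _ (fun x _ => uniform x)) -(bigA_distr_bigA (fun _ _ => 2^-1 : R)) /=.
rewrite big1 ?normr1 // => v _; rewrite big_bool /=; lra.
Qed.

Lemma L1A_setT (g : pt n -> R) : L1A setT g = L1 B g.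
Proof.
rewrite /L1A (eq_bigl xpredT) => [|S]; last exact: subsetT.
apply: eq_bigr => S _; congr `|_|; apply: eq_bigr => x _; congr (_ * _).
by apply: eq_bigr => v _; rewrite /weight in_setT.
Qed.

Lemma ancestral_setD1 A v : ancestral A -> childless A v -> ancestral (A :\ v).
Proof.
move=> ancA Av w u; rewrite !in_setD1 => /andP [_ wA] wu; rewrite (ancA _ _ wA wu) andbT.
by apply/eqP => uv; apply: (Av w wA); rewrite wu uv.
Qed.

Section CPOpen.
Hypothesis Bopen : cp_open B.

Lemma sigma_sqr v x : sigma B v x ^+ 2 = mu B v x * (1 - mu B v x).
Proof. by have /andP [m0 m1] := Bopen v x; rewrite sqr_sqrtr //; nra. Qed.

Lemma sigma_gt0 v x : 0 < sigma B v x.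
Proof. by have /andP [m0 m1] := Bopen v x; rewrite sqrtr_gt0; nra. Qed.

Lemma sigma_le_half v x : sigma B v x <= 2^-1.
Proof.
have s0 := sigma_gt0 v x; have /andP [m0 m1] := Bopen v x.
have := sigma_sqr v x; rewrite expr2 => s2.
have := sqr_ge0 (mu B v x - 2^-1); rewrite expr2; nra.
Qed.

Lemma mu_phi_true v x :
  pa B v <> Some v -> mu B v x * phi B v (upd x v true) = sigma B v x.
Proof.
move=> vv; rewrite /phi upd_eq (mu_free vv) (sigma_free vv) mulrA.
by rewrite -sigma_sqr expr2 mulfK ?gt_eqF ?sigma_gt0.
Qed.

Lemma mu_phi_false v x :
  pa B v <> Some v -> (1 - mu B v x) * phi B v (upd x v false) = - sigma B v x.
Proof.
move=> vv; rewrite /phi upd_eq (mu_free vv) (sigma_free vv) sub0r mulNr mulrN mulrA.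
rewrite [_ * mu _ _ _]mulrC.
by rewrite -sigma_sqr expr2 mulfK ?gt_eqF ?sigma_gt0.
Qed.

Lemma fcoefA_elimU1 A v (T0 T1 S : {set 'I_n}) :
  v \in A -> childless A v -> S \subset A :\ v ->
  fcoefA A (conj R T0 T1) (v |: S) =
  fcoefA (A :\ v) (fun x => (lit T0 T1 v true - lit T0 T1 v false) * sigma B v x
                            * conj R (T0 :\ v) (T1 :\ v) x) S.
Proof.
move=> vA Av /subsetD1P [sSA vS].
have Sv : childless S v by move=> w /(subsetP sSA); apply: Av.
have phiS_vS y : phiS B (v |: S) y = phi B v y * phiS B S y by rewrite /phiS big_setU1.
rewrite /fcoefA (sum_distrA_elim _ vA Av); apply: eq_bigr => x _; congr (_ * _).
rewrite !phiS_vS !(phiS_free vS Sv) !conj_upd [in RHS]mulrBl -[in RHS]mulrN.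
by rewrite -(mu_phi_false x (Av v vA)) -(mu_phi_true x (Av v vA)); ring.
Qed.

Lemma L1A_elim A v (T0 T1 : {set 'I_n}) : v \in A -> childless A v ->
  L1A A (conj R T0 T1) <=
    (`|lit_mean T0 T1 v false| + `|lit_dev T0 T1 v false|)
      * L1A (A :\ v) (conj R (T0 :\ v) (T1 :\ v))
  + (`|lit_mean T0 T1 v true - lit_mean T0 T1 v false|
      + `|lit_dev T0 T1 v true - lit_dev T0 T1 v false|)
      * L1A (A :\ v) (fun x => conj R (T0 :\ v) (T1 :\ v) x * (parent_bit v x)%:R).
Proof.
move=> vA Av; set f' := conj R (T0 :\ v) (T1 :\ v).
set g := fun x => f' x * (parent_bit v x)%:R.
have affine (F : bool -> R) (h : pt n -> R) S : (forall x, h x = F (parent_bit v x)) ->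
    fcoefA (A :\ v) (fun x => h x * f' x) S
    = F false * fcoefA (A :\ v) f' S + (F true - F false) * fcoefA (A :\ v) g S.
  by move=> hF; rewrite -fcoefA_affine; apply: eq_fcoefA => x; rewrite hF -bool_affine.
rewrite /L1A (sum_subset_setD1 _ vA) !big_distrr -big_split /=; apply: ler_sum => S sS.
rewrite (fcoefA_elim _ _ vA Av sS) (fcoefA_elimU1 _ _ vA Av sS)
  (affine (lit_mean T0 T1 v)) ?(affine (lit_dev T0 T1 v)).
- apply: le_trans (lerD (ler_normD _ _) (ler_normD _ _)) _.
  by rewrite !normrM !mulrDl addrACA.
- by move=> x; rewrite /lit_dev -sigma_parent_bit.
- by move=> x; rewrite /lit_mean -mu_parent_bit.
Qed.

Lemma lit_coef0_le (T0 T1 : {set 'I_n}) v :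
  `|lit_mean T0 T1 v false| + `|lit_dev T0 T1 v false| <= 3 / 2.
Proof.
have /andP [m0 m1] := Bopen v (const_pt false).
have sle := sigma_le_half v (const_pt false); have s0 := sigma_gt0 v (const_pt false).
have mean_le : `|lit_mean T0 T1 v false| <= 1.
  rewrite /lit_mean ler_norml.
  by case: (lit_bool T0 T1 v true) => ->; case: (lit_bool T0 T1 v false) => ->; lra.
have dev_le : `|lit_dev T0 T1 v false| <= 2^-1.
  rewrite /lit_dev normrM (gtr0_norm s0) -[2^-1]mul1r.
  exact: ler_pM (normr_ge0 _) (ltW s0) (lit_diff_le1 _ _ _) sle.
lra.
Qed.

Lemma L1A_elim_notin A v (T0 T1 : {set 'I_n}) :
  v \in A -> childless A v -> v \notin T0 :|: T1 ->
  L1A A (conj R T0 T1) <= L1A (A :\ v) (conj R (T0 :\ v) (T1 :\ v)).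
Proof.
move=> vA Av vT; apply: le_trans (L1A_elim _ _ vA Av) _.
by rewrite !lit_mean_out // !lit_dev_out // !subrr normr1 !normr0 !addr0 mul1r mul0r addr0.
Qed.

Section Recursion.
Variable alpha : R.
Hypotheses (alpha_ge0 : 0 <= alpha) (alpha_lt_half : alpha < 1 / 2).
Hypothesis Bdiff : diff_bounded B alpha.

Lemma lit_coef1_le (T0 T1 : {set 'I_n}) v :
  `|lit_mean T0 T1 v true - lit_mean T0 T1 v false|
  + `|lit_dev T0 T1 v true - lit_dev T0 T1 v false| <= 2 * alpha.
Proof.
have [mu_le sigma_le] := Bdiff v (const_pt true) (const_pt false).
have l_le := lit_diff_le1 T0 T1 v.
have -> : lit_mean T0 T1 v true - lit_mean T0 T1 v false
   = (mu B v (const_pt true) - mu B v (const_pt false)) * (lit T0 T1 v true - lit T0 T1 v false).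
  by rewrite /lit_mean; ring.
rewrite /lit_dev -mulrBr !normrM.
apply: le_trans (lerD (ler_pM _ _ mu_le l_le) (ler_pM _ _ l_le sigma_le)) _ => //; lra.
Qed.

Lemma L1A_elim_le A v (T0 T1 : {set 'I_n}) d :
  v \in A -> childless A v ->
  L1A (A :\ v) (conj R (T0 :\ v) (T1 :\ v)) <= growth alpha ^+ d ->
  (forall u, pa B v = Some u ->
     L1A (A :\ v) (conj R (T0 :\ v) (u |: T1 :\ v)) <= growth alpha ^+ d.+1) ->
  L1A A (conj R T0 T1) <= growth alpha ^+ d.+1.
Proof.
move=> vA Av X_le child_le; apply: le_trans (L1A_elim _ _ vA Av) _.
have K1 := growth_ge1 alpha_ge0 alpha_lt_half.
have K_step := growth_step alpha_ge0 alpha_lt_half.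
have k0 : 0 <= growth alpha ^+ d by rewrite exprn_ge0 // (le_trans ler01 K1).
rewrite L1A_conj_parent_bit.
set Y := if pa B v is Some u then _ else _.
have Y_ge0 : 0 <= Y by rewrite /Y; case: (pa B v) => [u|]; rewrite ?L1A_ge0.
have Y_le : Y <= growth alpha ^+ d.+1.
  rewrite /Y; case pav: (pa B v) => [u|]; first exact: child_le.
  by rewrite exprn_ge0 // (le_trans ler01 K1).
have coef_ge0 (a b : R) : 0 <= `|a| + `|b| by rewrite addr_ge0.
apply: le_trans (lerD (ler_pM (coef_ge0 _ _) (L1A_ge0 _ _) (lit_coef0_le T0 T1 v) X_le)
                      (ler_pM (coef_ge0 _ _) Y_ge0 (lit_coef1_le T0 T1 v) Y_le)) _.
rewrite exprS; nra.
Qed.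

Variable rk : 'I_n -> nat.
Hypothesis rk_pa : forall u v, pa B v = Some u -> (rk u < rk v)%N.

Lemma exists_childless A : A != set0 -> exists2 v, v \in A & childless A v.
Proof.
case/set0Pn => i0 i0A; case: (arg_maxnP rk i0A) => v vA vmax.
by exists v => // w wA /rk_pa; apply/negP; rewrite -leqNgt; apply: vmax.
Qed.

Lemma L1A_conj_le A : ancestral A -> forall d (T0 T1 : {set 'I_n}),
  T0 \subset A -> T1 \subset A -> (#|T0 :|: T1| <= d)%N ->
  L1A A (conj R T0 T1) <= growth alpha ^+ d.
Proof.
have [m ltAm] := ubnP #|A|; elim: m A ltAm => // m IH A ltAm ancA d T0 T1 sT0A sT1A leTd.
have [A0 | /exists_childless [v vA Av]] := eqVneq A set0.
  move: sT0A sT1A; rewrite A0 !subset0 => /eqP -> /eqP ->.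
  by rewrite L1A_set0 exprn_ege1 // growth_ge1.
have ltA'm : (#|A :\ v| < m)%N by move: ltAm; rewrite (cardsD1 v A) vA.
have {}IH := IH (A :\ v) ltA'm (ancestral_setD1 ancA Av).
have sT0' : T0 :\ v \subset A :\ v by apply: setSD.
have sT1' : T1 :\ v \subset A :\ v by apply: setSD.
have T'E : T0 :\ v :|: T1 :\ v = (T0 :|: T1) :\ v by rewrite setDUl.
have [vT | vT] := boolP (v \in T0 :|: T1); last first.
  apply: le_trans (L1A_elim_notin vA Av vT) _; apply: IH => //.
  by rewrite T'E; apply: leq_trans (subset_leq_card (subsetDl _ _)) leTd.
case: d leTd => [|d] leTd; first by move: leTd; rewrite (cardsD1 v) vT.
have leT'd : (#|T0 :\ v :|: T1 :\ v| <= d)%N by move: leTd; rewrite T'E (cardsD1 v) vT.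
apply: (L1A_elim_le vA Av (IH d _ _ sT0' sT1' leT'd)) => u pav.
have uA' : u \in A :\ v.
  by rewrite in_setD1 (ancA _ _ vA pav) andbT; apply/eqP => uv; apply: (Av v vA); rewrite pav uv.
apply: IH; rewrite ?subUset ?sub1set ?uA' //.
by rewrite setUCA cardsU1 -add1n leq_add ?leq_b1.
Qed.

End Recursion.

End CPOpen.

End ForestBN.

Theorem mainTheorem8 (R : rcfType) (n : nat) (B : forestBN R n) (alpha : R)
  (d : nat) (T0 T1 : {set 'I_n}) :
  0 <= alpha -> alpha < 1 / 2 ->
  acyclic B -> cp_open B -> diff_bounded B alpha ->
  [disjoint T0 & T1] -> #|T0 :|: T1| = d ->
  L1 B (conj R T0 T1) <= ((2 - 2 * alpha) / (1 - 2 * alpha)) ^+ (2 * d).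
Proof.
move=> alpha_ge0 alpha_lt_half [rk rk_pa] Bopen Bdiff _ cardT.
rewrite -L1A_setT exprM.
apply: (L1A_conj_le Bopen alpha_ge0 alpha_lt_half Bdiff rk_pa) => //; rewrite ?subsetT ?cardT //.
by move=> w u _ _; rewrite in_setT.
Qed.
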